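(* Let $f:X\to Y$ be a surjective perfect map from a normal ballean $X$ onto a ballean $Y$. Then $Y$ is normal.
   Context: A ballean is a pair $(X,\mathcal E_X)$ where $X$ is a set and $\mathcal E_X$ is a family of subsets of $X\times X$ (entourages) such that: each $E\in\mathcal E_X$ contains the diagonal; for any $E,F\in\mathcal E_X$ there is $D\in\mathcal E_X$ with $E\circ F^{-1}\subset D$; and $\bigcup\mathcal E_X=X\times X$. For $E\in\mathcal E_X$, $x\in X$, $A\subset X$: $E[x]=\{y:(x,y)\in E\}$, $E[A]=\bigcup_{a\in A}E[a]$. $B\subset X$ is bounded if $B\subset E[x]$ for some $E\in\mathcal E_X$, $x\in X$; $\mathcal B_X$ is the family of bounded sets. Sets $A,B$ are asymptotically disjoint if $E[A]\cap E[B]\in\mathcal B_X$ for all $E\in\mathcal E_X$; $U$ is an asymptotic neighborhood of $A$ if $E[A]\setminus U\in\mathcal B_X$ for all $E$; $X$ is normal if any two asymptotically disjoint sets have disjoint asymptotic neighborhoods. A map $f:X\to Y$ is macro-uniform if for every $E_X\in\mathcal E_X$ there is $E_Y\in\mathcal E_Y$ with $f(E_X[x])\subset E_Y[f(x)]$ for all $x\in X$; proper if $f^{-1}(B)$ is bounded for every bounded $B\subset Y$; closed if for any asymptotically disjoint sets $A,B\subset X$ with $A=f^{-1}(f(A))$ the sets $f(A),f(B)$ are asymptotically disjoint in $Y$; and perfect if it is macro-uniform, closed and proper. *)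

Set Implicit Arguments.

Definition rel (X : Type) := X -> X -> Prop.
Definition subset (X : Type) := X -> Prop.

Definition rel_inv {X : Type} (F : rel X) : rel X := fun x y => F y x.
Definition rel_comp {X : Type} (E G : rel X) : rel X :=
  fun x y => exists z, G x z /\ E z y.
Definition rel_sub {X : Type} (E F : rel X) : Prop := forall x y, E x y -> F x y.

Record ballean := Ballean {
  carrier :> Type;
  entourage : rel carrier -> Prop;
  ent_diag : forall E, entourage E -> forall x, E x x;
  ent_comp : forall E F, entourage E -> entourage F ->
     exists D, entourage D /\ rel_sub (rel_comp E (rel_inv F)) D;
  ent_cover : forall x y, exists E, entourage E /\ E x y
}.

Section BalleanNotions.
Variable X : ballean.

Definition ball (E : rel X) (x : X) : subset X := fun y => E x y.
Definition ballA (E : rel X) (A : subset X) : subset X :=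
  fun y => exists a, A a /\ E a y.

Definition bounded (B : subset X) : Prop :=
  exists E x, entourage X E /\ forall y, B y -> ball E x y.

Definition asym_disjoint (A B : subset X) : Prop :=
  forall E, entourage X E -> bounded (fun y => ballA E A y /\ ballA E B y).

Definition asym_nbhd (U A : subset X) : Prop :=
  forall E, entourage X E -> bounded (fun y => ballA E A y /\ ~ U y).

Definition normal : Prop :=
  forall A B : subset X, asym_disjoint A B ->
    exists U V : subset X, asym_nbhd U A /\ asym_nbhd V B /\
      (forall x, U x -> V x -> False).
End BalleanNotions.

Arguments bounded {X} B.
Arguments asym_disjoint {X} A B.
Arguments asym_nbhd {X} U A.
Arguments ball {X} E x.
Arguments ballA {X} E A.

Definition image {X Y : Type} (f : X -> Y) (A : X -> Prop) : Y -> Prop :=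
  fun y => exists x, A x /\ f x = y.
Definition preimage {X Y : Type} (f : X -> Y) (B : Y -> Prop) : X -> Prop :=
  fun x => B (f x).

Definition macro_uniform {X Y : ballean} (f : X -> Y) : Prop :=
  forall EX, entourage X EX -> exists EY, entourage Y EY /\
    forall x x', ball EX x x' -> ball EY (f x) (f x').

Definition proper {X Y : ballean} (f : X -> Y) : Prop :=
  forall B : subset Y, bounded B -> bounded (preimage f B).

Definition closed_map {X Y : ballean} (f : X -> Y) : Prop :=
  forall A B : subset X, asym_disjoint A B ->
    (forall x, A x <-> preimage f (image f A) x) ->
    asym_disjoint (image f A) (image f B).

Definition perfect {X Y : ballean} (f : X -> Y) : Prop :=
  macro_uniform f /\ closed_map f /\ proper f.

(** Asymptotically disjoint [A], [B] in [Y] have asymptotically disjoint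
    preimages (macro-uniformity and properness), which normality of [X]
    separates by asymptotic neighbourhoods [U], [V].  The small images
    [f#U = {y | f^-1(y) ⊆ U}] and [f#V] are disjoint by surjectivity, and
    they are asymptotic neighbourhoods of [A] and [B] because [f] is closed:
    the saturated set [f^-1(A)] is asymptotically disjoint from the
    complement of [U], so its image [A] is asymptotically disjoint from the
    complement of [f#U], which is [f(X \ U)]. *)

From Stdlib Require Import Classical.

Lemma entourage_inv {X : ballean} {E : rel X} : entourage X E ->
  exists D, entourage X D /\ forall x y, E x y -> D y x.
Proof.
  intros HE. destruct (ent_comp X E E HE HE) as [D [HD Hsub]].
  exists D; split; [exact HD |].
  intros x y Hxy. apply Hsub. exists x. split; [exact Hxy | exact (ent_diag X E HE x)].
Qed.

Lemma entourage_trans {X : ballean} {E F : rel X} :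
  entourage X E -> entourage X F ->
  exists D, entourage X D /\ forall x y z, E x y -> F y z -> D x z.
Proof.
  intros HE HF. destruct (entourage_inv HE) as [Ei [HEi Hinv]].
  destruct (ent_comp X F Ei HF HEi) as [D [HD Hsub]].
  exists D; split; [exact HD |].
  intros x y z Hxy Hyz. apply Hsub. exists y. split; [apply Hinv; exact Hxy | exact Hyz].
Qed.

Lemma bounded_subset {X : ballean} (A B : subset X) :
  bounded B -> (forall x, A x -> B x) -> bounded A.
Proof. intros [E [x [HE HB]]] HAB. exists E, x. split; auto. Qed.

Lemma bounded_ballA {X : ballean} {E : rel X} {B : subset X} :
  entourage X E -> bounded B -> bounded (ballA E B).
Proof.
  intros HE [F [x0 [HF HB]]].
  destruct (entourage_trans HF HE) as [D [HD Htrans]].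
  exists D, x0. split; [exact HD |].
  intros y [b [Hb Hby]]. apply Htrans with b; [apply HB |]; assumption.
Qed.

Lemma asym_nbhd_disjoint_compl {X : ballean} {U A : subset X} :
  asym_nbhd U A -> asym_disjoint A (fun x => ~ U x).
Proof.
  intros HU E HE.
  destruct (entourage_inv HE) as [Ei [HEi Hinv]].
  destruct (entourage_trans HE HEi) as [D [HD Htrans]].
  (* a point E-close to both A and a point c outside U sits at c, D-close to A *)
  apply bounded_subset with (ballA E (fun y => ballA D A y /\ ~ U y)).
  - exact (bounded_ballA HE (HU D HD)).
  - intros z [[a [Ha Haz]] [c [Hc Hcz]]]. exists c. split; [| exact Hcz].
    split; [| exact Hc]. exists a. split; [exact Ha |].
    apply Htrans with z; [exact Haz | apply Hinv; exact Hcz].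
Qed.

Lemma preimage_asym_disjoint {X Y : ballean} {f : X -> Y} {A B : subset Y} :
  macro_uniform f -> proper f -> asym_disjoint A B ->
  asym_disjoint (preimage f A) (preimage f B).
Proof.
  intros Hmu Hpr HAB E HE.
  destruct (Hmu E HE) as [EY [HEY Hball]].
  apply bounded_subset with (preimage f (fun y => ballA EY A y /\ ballA EY B y)).
  - apply Hpr, HAB, HEY.
  - intros z [[a [Ha Haz]] [b [Hb Hbz]]]. split.
    + exists (f a). split; [exact Ha | apply Hball; exact Haz].
    + exists (f b). split; [exact Hb | apply Hball; exact Hbz].
Qed.

Lemma preimage_saturated {X Y : Type} (f : X -> Y) (A : Y -> Prop) (x : X) :
  preimage f A x <-> preimage f (image f (preimage f A)) x.
Proof.
  unfold preimage, image. split.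
  - intros Hx. exists x. split; [exact Hx | reflexivity].
  - intros [x' [Hx' Heq]]. rewrite <- Heq. exact Hx'.
Qed.

Lemma image_preimage_surj {X Y : Type} (f : X -> Y) (A : Y -> Prop) (y : Y) :
  (forall y, exists x, f x = y) -> A y -> image f (preimage f A) y.
Proof.
  intros Hsurj Hy. destruct (Hsurj y) as [x Hx].
  exists x. split; [unfold preimage; rewrite Hx; exact Hy | exact Hx].
Qed.

Definition small_image {X Y : Type} (f : X -> Y) (U : X -> Prop) : Y -> Prop :=
  fun y => ~ image f (fun x => ~ U x) y.

Lemma small_image_asym_nbhd {X Y : ballean} {f : X -> Y} {A : subset Y} {U : subset X} :
  (forall y, exists x, f x = y) -> closed_map f ->
  asym_nbhd U (preimage f A) -> asym_nbhd (small_image f U) A.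
Proof.
  intros Hsurj Hcl HU E HE.
  pose proof (Hcl _ _ (asym_nbhd_disjoint_compl HU) (preimage_saturated f A))
    as Himg_disj.
  apply bounded_subset with (fun y => ballA E (image f (preimage f A)) y /\
                                      ballA E (image f (fun x => ~ U x)) y).
  - exact (Himg_disj E HE).
  - intros y [[a [Ha Hay]] Hy]. apply NNPP in Hy. split.
    + exists a. split; [apply image_preimage_surj |]; assumption.
    + exists y. split; [exact Hy | exact (ent_diag Y E HE y)].
Qed.

Lemma small_image_disjoint {X Y : Type} {f : X -> Y} {U V : X -> Prop} :
  (forall y, exists x, f x = y) -> (forall x, U x -> V x -> False) ->
  forall y, small_image f U y -> small_image f V y -> False.
Proof.
  intros Hsurj HUV y HUy HVy. destruct (Hsurj y) as [x Hx].
  apply (HUV x); apply NNPP; intros Hn;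
    [apply HUy | apply HVy]; exists x; split; assumption.
Qed.

Theorem proposition2p3 (X Y : ballean) (f : X -> Y) :
  (forall y : Y, exists x : X, f x = y) ->
  perfect f -> normal X -> normal Y.
Proof.
  intros Hsurj [Hmu [Hcl Hpr]] HX A B HAB.
  destruct (HX _ _ (preimage_asym_disjoint Hmu Hpr HAB)) as [U [V [HU [HV HUV]]]].
  exists (small_image f U), (small_image f V).
  split; [| split].
  - exact (small_image_asym_nbhd Hsurj Hcl HU).
  - exact (small_image_asym_nbhd Hsurj Hcl HV).
  - exact (small_image_disjoint Hsurj HUV).
Qed.
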